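(* Let $r$ be a ring of an $m$-partial SCS that crosses itself at a crossing point $c$ between circles $C_i$ and $C_j$. Then every starving robot in $r$ passes through $c$ periodically, alternating between the two crossing directions (from $C_i$ to $C_j$ and from $C_j$ to $C_i$).
   Context: Let $T=\{C_1,\dots,C_n\}$ be pairwise disjoint unit circles in the plane (trajectories) and $\epsilon<0.5$ a communication range. The graph of potential links $G_\epsilon(T)$ has the circle centers as nodes and an edge $\{i,j\}$ whenever the centers of $C_i,C_j$ are at distance at most $2+\epsilon$; it is assumed connected. Points of a circle are identified with angles (modulo $2\pi$), and a robot traverses a circle in one time unit. A schedule is a pair $(f,g)$, $f:T\to[0,2\pi)$, $g:T\to\{-1,1\}$ ($1$ = counterclockwise); the robot on $C_i$ is at angle $f(C_i)+2\pi g(C_i)t$ at time $t$. A communication graph $G=(V,E)$ is a connected spanning subgraph of $G_\epsilon(T)$. The link position $\phi_{ij}$ is the point of $C_i$ closest to $C_j$. A schedule is $G$-synchronized if for every $\{i,j\}\in E$ the robot on $C_i$ is at $\phi_{ij}$ exactly when the robot on $C_j$ is at $\phi_{ji}$. An SCS with communication graph $G$ consists of $n$ robots, one per circle, moving under a $G$-synchronized schedule with $g(C_i)=-g(C_j)$ for all $\{i,j\}\in E$. Shifting protocol: when a robot on $C_i$ reaches $\phi_{ij}$ and there is no robot at $\phi_{ji}$, it moves to $C_j$ and thereafter follows the schedule of $C_j$. An $m$-partial SCS is obtained by removing $n-m$ robots, the remaining $m$ applying the shifting protocol. A surviving robot starves if every time it arrives at a link position the corresponding neighbor is absent. A ring is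 the closed path traversed by a starving robot (following the assigned direction on each circle and always shifting to the neighboring circle at link positions). The crossing point of neighboring circles $C_i,C_j$ is the midpoint of the segment joining $\phi_{ij}$ and $\phi_{ji}$; it can be traversed in two crossing directions, $C_i\to C_j$ and $C_j\to C_i$. A ring crosses itself at a crossing point if it traverses that point in both crossing directions. *)

From Stdlib Require Import Reals Lra Relations.
Open Scope R_scope.

Definition point := (R * R)%type.
Definition dist (p q : point) : R :=
  sqrt ((fst p - fst q) ^ 2 + (snd p - snd q) ^ 2).

Definition disjoint_unit_circles (n : nat) (ctr : nat -> point) : Prop :=
  forall i j, (i < n)%nat -> (j < n)%nat -> i <> j -> 2 < dist (ctr i) (ctr j).

Definition potential_link (n : nat) (eps : R) (ctr : nat -> point) (i j : nat)
  : Prop :=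
  (i < n)%nat /\ (j < n)%nat /\ i <> j /\ dist (ctr i) (ctr j) <= 2 + eps.

Definition connected_on (n : nat) (E : nat -> nat -> Prop) : Prop :=
  forall i j, (i < n)%nat -> (j < n)%nat -> clos_refl_trans nat E i j.

Definition comm_graph (n : nat) (eps : R) (ctr : nat -> point)
  (E : nat -> nat -> Prop) : Prop :=
  (forall i j, E i j -> E j i) /\
  (forall i j, E i j -> potential_link n eps ctr i j) /\
  connected_on n E.

Definition schedule (n : nat) (f g : nat -> R) : Prop :=
  forall i, (i < n)%nat -> 0 <= f i < 2 * PI /\ (g i = 1 \/ g i = -1).

Definition sched_angle (f g : nat -> R) (i : nat) (t : R) : R :=
  f i + 2 * PI * g i * t.

(** The schedule of C_i is at the link position phi_ij (the point of C_i
    closest to C_j) at time t: the unit vector of angle [sched_angle] is the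
    unit vector pointing from the center of C_i to the center of C_j. *)
Definition at_link (ctr : nat -> point) (f g : nat -> R) (i j : nat) (t : R)
  : Prop :=
  let d := dist (ctr i) (ctr j) in
  cos (sched_angle f g i t) = (fst (ctr j) - fst (ctr i)) / d /\
  sin (sched_angle f g i t) = (snd (ctr j) - snd (ctr i)) / d.

Definition synchronized (ctr : nat -> point) (E : nat -> nat -> Prop)
  (f g : nat -> R) : Prop :=
  forall i j t, E i j -> (at_link ctr f g i j t <-> at_link ctr f g j i t).

Definition SCS_schedule (n : nat) (ctr : nat -> point) (E : nat -> nat -> Prop)
  (f g : nat -> R) : Prop :=
  schedule n f g /\ synchronized ctr E f g /\
  (forall i j, E i j -> g i = - g j).

(** The robot starts on
    circle [c 0] at time [s 0]; during [s k, s (k+1)] it is on circle [c k],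
    following the schedule of [c k]; at time [s (k+1)] it is at the link
    position phi_{c k, c (k+1)} and shifts to [c (k+1)] (a starving robot never
    finds the neighbor present, so it shifts at every link position it
    reaches); strictly between [s k] and [s (k+1)] it reaches no link position
    of [c k]. *)
Definition starving_motion (n : nat) (ctr : nat -> point)
  (E : nat -> nat -> Prop) (f g : nat -> R) (c : nat -> nat) (s : nat -> R)
  : Prop :=
  (c 0 < n)%nat /\
  forall k,
    s k < s (S k) /\
    E (c k) (c (S k)) /\
    at_link ctr f g (c k) (c (S k)) (s (S k)) /\
    (forall t l, s k < t < s (S k) -> E (c k) l -> ~ at_link ctr f g (c k) l t).

(** At its k-th shift (time [s (k+1)]) the robot traverses the crossing point
    of C_i and C_j in the crossing direction C_i -> C_j. *)
Definition crosses_dir (c : nat -> nat) (i j k : nat) : Prop :=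
  c k = i /\ c (S k) = j.

Definition crosses_at (c : nat -> nat) (i j k : nat) : Prop :=
  crosses_dir c i j k \/ crosses_dir c j i k.

From Pilot Require Import Defs.
From Stdlib Require Import Reals Lra Lia List Classical.
Open Scope R_scope.

(* A starving robot moves deterministically in both directions of time.  On a circle
   the link positions recur with period 1, and at any moment the robot is at most at one
   of them, since the centres of two neighbours of C_i seen in the same direction are
   less than eps < 2 apart.  Hence a passage (c_k, c_(k+1)), whose time is fixed modulo 1,
   determines the next passage, and, since by synchronisation the robot enters each circle
   at a link position, also the previous one.  With finitely many circles the sequence
   of passages is therefore purely periodic, and so are the shift times.  If two
   consecutive passages through a self-crossing point had the same direction, their
   distance would be a period, and the window between them would contain a passage in
   the opposite direction. *)

Lemma sin_2kPI (k : Z) : sin (2 * IZR k * PI) = 0.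
Proof. apply sin_eq_0_1; exists (2 * k)%Z; rewrite mult_IZR; ring. Qed.

Lemma cos_2kPI (k : Z) : cos (2 * IZR k * PI) = 1.
Proof.
  replace (2 * IZR k * PI) with (2 * (IZR k * PI)) by ring.
  rewrite cos_2a_sin, (sin_eq_0_1 (IZR k * PI)) by (exists k; ring); ring.
Qed.

Lemma cos_sin_eq_2kPI (a b : R) :
  cos a = cos b -> sin a = sin b -> exists k, a = b + 2 * IZR k * PI.
Proof.
  intros Hc Hs.
  assert (Hcos : cos (2 * ((a - b) / 2)) = 1).
  { replace (2 * ((a - b) / 2)) with (a - b) by field.
    rewrite cos_minus, Hc, Hs; pose proof (sin2_cos2 b); unfold Rsqr in *; lra. }
  rewrite cos_2a_sin in Hcos.
  assert (Hsin : sin ((a - b) / 2) = 0) by nra.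
  destruct (sin_eq_0_0 _ Hsin) as [k Hk]; exists k; lra.
Qed.

Lemma sched_angle_add_int (f g : nat -> R) (i : nat) (t : R) (m : Z) :
  g i = 1 \/ g i = -1 ->
  exists k, sched_angle f g i (t + IZR m) = sched_angle f g i t + 2 * IZR k * PI.
Proof.
  unfold sched_angle; intros [-> | ->]; [exists m | exists (- m)%Z; rewrite opp_IZR]; ring.
Qed.

Lemma at_link_add_int ctr f g i l t m :
  g i = 1 \/ g i = -1 -> at_link ctr f g i l t -> at_link ctr f g i l (t + IZR m).
Proof.
  unfold at_link; cbv zeta; intros Hg [Hc Hs].
  destruct (sched_angle_add_int f g i t m Hg) as [k ->].
  rewrite cos_plus, sin_plus, sin_2kPI, cos_2kPI, <- Hc, <- Hs; split; ring.
Qed.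

Lemma at_link_times_congr ctr f g i l t1 t2 :
  g i = 1 \/ g i = -1 -> at_link ctr f g i l t1 -> at_link ctr f g i l t2 ->
  exists m, t1 = t2 + IZR m.
Proof.
  unfold at_link; cbv zeta; intros Hg [Hc1 Hs1] [Hc2 Hs2].
  destruct (cos_sin_eq_2kPI (sched_angle f g i t1) (sched_angle f g i t2)) as [k Hk];
    [congruence | congruence |].
  unfold sched_angle in Hk; pose proof PI_RGT_0.
  destruct Hg as [Hg | Hg]; rewrite Hg in Hk;
    [exists k | exists (- k)%Z; rewrite opp_IZR]; nra.
Qed.

Lemma at_link_dist ctr f g i l l' t :
  0 < Defs.dist (ctr i) (ctr l) -> 0 < Defs.dist (ctr i) (ctr l') ->
  at_link ctr f g i l t -> at_link ctr f g i l' t ->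
  Defs.dist (ctr l) (ctr l') =
  Rabs (Defs.dist (ctr i) (ctr l) - Defs.dist (ctr i) (ctr l')).
Proof.
  unfold at_link; cbv zeta.
  set (d := Defs.dist (ctr i) (ctr l)); set (d' := Defs.dist (ctr i) (ctr l')).
  set (a := sched_angle f g i t).
  intros Hd Hd' [Hc Hs] [Hc' Hs'].
  unfold Defs.dist at 1; rewrite <- sqrt_Rsqr_abs; f_equal.
  assert (Ex : fst (ctr l) - fst (ctr i) = d * cos a) by (rewrite Hc; field; lra).
  assert (Ex' : fst (ctr l') - fst (ctr i) = d' * cos a) by (rewrite Hc'; field; lra).
  assert (Ey : snd (ctr l) - snd (ctr i) = d * sin a) by (rewrite Hs; field; lra).
  assert (Ey' : snd (ctr l') - snd (ctr i) = d' * sin a) by (rewrite Hs'; field; lra).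
  assert (Hx : fst (ctr l) - fst (ctr l') = (d - d') * cos a) by lra.
  assert (Hy : snd (ctr l) - snd (ctr l') = (d - d') * sin a) by lra.
  rewrite Hx, Hy, <- (Rmult_1_r (Rsqr (d - d'))), <- (sin2_cos2 a); unfold Rsqr; ring.
Qed.

Lemma at_link_unique n eps ctr f g i l l' t :
  eps < 1 / 2 -> disjoint_unit_circles n ctr ->
  potential_link n eps ctr i l -> potential_link n eps ctr i l' ->
  at_link ctr f g i l t -> at_link ctr f g i l' t -> l = l'.
Proof.
  intros Heps Hdisj (Hi & Hl & Hil & Hd) (_ & Hl' & Hil' & Hd') Ht Ht'.
  destruct (PeanoNat.Nat.eq_dec l l') as [| Hll']; [assumption | exfalso].
  pose proof (Hdisj i l Hi Hl Hil); pose proof (Hdisj i l' Hi Hl' Hil').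
  pose proof (Hdisj l l' Hl Hl' Hll').
  rewrite (at_link_dist ctr f g i l l' t) in * by (assumption || lra).
  assert (Rabs (Defs.dist (ctr i) (ctr l) - Defs.dist (ctr i) (ctr l')) < 1 / 2)
    by (apply Rabs_def1; lra).
  lra.
Qed.

Lemma exists_repeat (A : Type) (h : nat -> A) (L : list A) :
  (forall k, In (h k) L) -> exists a b, (a < b)%nat /\ h a = h b.
Proof.
  intros HL; apply NNPP; intros Hinj.
  assert (Hnodup : NoDup (map h (seq 0 (S (length L))))).
  { apply NoDup_map_NoDup_ForallPairs; [| apply seq_NoDup].
    intros a b _ _ Hab; destruct (PeanoNat.Nat.lt_total a b) as [Hlt | [Heq | Hlt]];
      [| assumption |]; exfalso; apply Hinj; eauto. }
  assert (Hincl : incl (map h (seq 0 (S (length L)))) L).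
  { intros x Hx; apply in_map_iff in Hx as [k [<- _]]; apply HL. }
  pose proof (NoDup_incl_length Hnodup Hincl) as Hlen.
  rewrite length_map, length_seq in Hlen; lia.
Qed.

Section ShiftInvariantSequence.

Variables (A : Type) (h : nat -> A).
Hypothesis h_succ_eq : forall a b, h (S a) = h (S b) <-> h a = h b.

Lemma shifted_eq_iff m a b : h (m + a) = h (m + b) <-> h a = h b.
Proof. induction m as [| m IH]; [reflexivity | simpl; rewrite h_succ_eq; exact IH]. Qed.

Lemma periodic_of_repeat a p : h (a + p) = h a -> forall k, h (k + p) = h k.
Proof.
  intros Hrep k.
  assert (Hp : h p = h 0) by (apply (shifted_eq_iff a); rewrite Nat.add_0_r; exact Hrep).
  rewrite <- (Nat.add_0_r k) at 2; apply shifted_eq_iff, Hp.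
Qed.

Lemma periodic_add_mul p (Hper : forall k, h (k + p) = h k) m k : h (k + m * p) = h k.
Proof.
  induction m as [| m IH]; [now rewrite Nat.add_0_r |].
  replace (k + S m * p)%nat with (k + m * p + p)%nat by lia; rewrite Hper; exact IH.
Qed.

Lemma periodic_window p (Hp : (0 < p)%nat) (Hper : forall k, h (k + p) = h k) a k :
  exists k', (a <= k' < a + p)%nat /\ h k' = h k.
Proof.
  set (K := (k + a * p)%nat).
  exists (a + (K - a) mod p)%nat; split.
  - pose proof (Nat.mod_upper_bound (K - a) p ltac:(lia)); lia.
  - assert (HK : K = (a + (K - a) mod p + (K - a) / p * p)%nat).
    { pose proof (Nat.div_mod_eq (K - a) p); assert (a <= K)%nat by (unfold K; nia); lia. }
    rewrite <- (periodic_add_mul p Hper ((K - a) / p)), <- HK.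
    apply periodic_add_mul, Hper.
Qed.

Lemma periodic_of_finite_range (L : list A) :
  (forall k, In (h k) L) -> exists p, (0 < p)%nat /\ forall k, h (k + p) = h k.
Proof.
  intros HL; destruct (exists_repeat A h L HL) as (a & b & Hab & Heq).
  exists (b - a)%nat; split; [lia |].
  apply (periodic_of_repeat a); replace (a + (b - a))%nat with b by lia; auto.
Qed.

End ShiftInvariantSequence.

Definition passage (c : nat -> nat) (k : nat) : nat * nat := (c k, c (S k)).

Lemma crosses_dir_passage c i j k : crosses_dir c i j k <-> passage c k = (i, j).
Proof. unfold crosses_dir, passage; rewrite pair_equal_spec; reflexivity. Qed.

Section StarvingRobot.

Variables (n : nat) (ctr : nat -> point) (E : nat -> nat -> Prop) (f g : nat -> R).
Variables (c : nat -> nat) (s : nat -> R).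

Hypothesis E_sym : forall i j, E i j -> E j i.
Hypothesis sync : synchronized ctr E f g.
Hypothesis link_unique : forall i l l' t,
  E i l -> E i l' -> at_link ctr f g i l t -> at_link ctr f g i l' t -> l = l'.
Hypothesis motion : starving_motion n ctr E f g c s.
Hypothesis ring_in_range : forall k, (c k < n)%nat.
Hypothesis g_ring : forall k, g (c k) = 1 \/ g (c k) = -1.

Lemma shift_time_lt k : s k < s (S k).
Proof. apply motion. Qed.

Lemma shift_edge k : E (c k) (c (S k)).
Proof. apply motion. Qed.

Lemma shift_at_link k : at_link ctr f g (c k) (c (S k)) (s (S k)).
Proof. apply motion. Qed.

Lemma entry_at_link k : at_link ctr f g (c (S k)) (c k) (s (S k)).
Proof. apply (sync _ _ _ (shift_edge k)), shift_at_link. Qed.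

(* The link positions recur with period 1, so no translate of a link time by a whole
   number of time units falls strictly inside a stay on a circle. *)
Lemma no_link_during_stay k l u m :
  E (c k) l -> at_link ctr f g (c k) l u -> ~ (s k < u + IZR m < s (S k)).
Proof.
  intros Hkl Hu Hin.
  apply (proj2 (proj2 (proj2 (proj2 motion k))) (u + IZR m) l Hin Hkl).
  apply at_link_add_int; [apply g_ring | exact Hu].
Qed.

Lemma exit_time_congr a b D :
  c a = c b -> s a = s b + IZR D -> s (S a) = s (S b) + IZR D.
Proof.
  intros Hc Hs.
  pose proof (shift_time_lt a); pose proof (shift_time_lt b).
  destruct (Rtotal_order (s (S a)) (s (S b) + IZR D)) as [Hlt | [Heq | Hgt]];
    [exfalso | exact Heq | exfalso].
  - apply (no_link_during_stay b (c (S a)) (s (S a)) (- D));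
      [rewrite <- Hc; apply shift_edge | rewrite <- Hc; apply shift_at_link |].
    rewrite opp_IZR; lra.
  - apply (no_link_during_stay a (c (S b)) (s (S b)) D);
      [rewrite Hc; apply shift_edge | rewrite Hc; apply shift_at_link | lra].
Qed.

Lemma entry_time_congr a b D :
  c (S a) = c (S b) -> s (S (S a)) = s (S (S b)) + IZR D -> s (S a) = s (S b) + IZR D.
Proof.
  intros Hc Hs.
  pose proof (shift_time_lt (S a)); pose proof (shift_time_lt (S b)).
  destruct (Rtotal_order (s (S a)) (s (S b) + IZR D)) as [Hlt | [Heq | Hgt]];
    [exfalso | exact Heq | exfalso].
  - apply (no_link_during_stay (S a) (c b) (s (S b)) D);
      [rewrite Hc; apply E_sym, shift_edge | rewrite Hc; apply entry_at_link | lra].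
  - apply (no_link_during_stay (S b) (c a) (s (S a)) (- D));
      [rewrite <- Hc; apply E_sym, shift_edge | rewrite <- Hc; apply entry_at_link |].
    rewrite opp_IZR; lra.
Qed.

Lemma passage_time_congr a b :
  passage c a = passage c b -> exists D, s (S a) = s (S b) + IZR D.
Proof.
  unfold passage; rewrite pair_equal_spec; intros [Hc Hc'].
  apply (at_link_times_congr ctr f g (c a) (c (S a))); [apply g_ring | apply shift_at_link |].
  rewrite Hc, Hc'; apply shift_at_link.
Qed.

Lemma passage_succ_eq a b : passage c (S a) = passage c (S b) <-> passage c a = passage c b.
Proof.
  unfold passage; rewrite !pair_equal_spec; split.
  - intros [Hc1 Hc2].
    destruct (passage_time_congr (S a) (S b)) as [D HD];
      [unfold passage; rewrite Hc1, Hc2; reflexivity |].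
    pose proof (entry_time_congr a b D Hc1 HD) as Hs.
    split; [| exact Hc1].
    apply (link_unique (c (S a)) _ _ (s (S a)));
      [apply E_sym, shift_edge | rewrite Hc1; apply E_sym, shift_edge | apply entry_at_link |].
    rewrite Hs, Hc1; apply at_link_add_int; [apply g_ring | apply entry_at_link].
  - intros [Hc0 Hc1].
    destruct (passage_time_congr a b) as [D HD];
      [unfold passage; rewrite Hc0, Hc1; reflexivity |].
    pose proof (exit_time_congr (S a) (S b) D Hc1 HD) as Hs.
    split; [exact Hc1 |].
    apply (link_unique (c (S a)) _ _ (s (S (S a))));
      [apply shift_edge | rewrite Hc1; apply shift_edge | apply shift_at_link |].
    rewrite Hs, Hc1; apply at_link_add_int; [apply g_ring | apply shift_at_link].
Qed.

Lemma passage_time_shift a b :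
  passage c a = passage c b -> s (S (S a)) - s (S (S b)) = s (S a) - s (S b).
Proof.
  intros Hab; destruct (passage_time_congr a b Hab) as [D HD].
  unfold passage in Hab; apply pair_equal_spec in Hab as [_ Hc1].
  pose proof (exit_time_congr (S a) (S b) D Hc1 HD); lra.
Qed.

Lemma passages_periodic : exists p, (0 < p)%nat /\ forall k, passage c (k + p) = passage c k.
Proof.
  apply (periodic_of_finite_range _ _ passage_succ_eq (list_prod (seq 0 n) (seq 0 n))).
  intros k; apply in_prod; apply in_seq; split; [lia | apply ring_in_range | lia |].
  apply ring_in_range.
Qed.

Lemma shift_times_periodic p :
  (forall k, passage c (k + p) = passage c k) ->
  forall k, s (S (k + p)) - s (S k) = s (S p) - s 1.
Proof.
  intros Hper k; induction k as [| k IH]; [reflexivity |].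
  rewrite <- IH; simpl; apply passage_time_shift, Hper.
Qed.

Lemma shift_times_increasing k m : (k < m)%nat -> s k < s m.
Proof.
  induction 1 as [| m _ IH]; [apply shift_time_lt |].
  apply (Rlt_trans _ _ _ IH), shift_time_lt.
Qed.

Lemma opposite_passage_between i j k1 k2 :
  i <> j -> (exists k, crosses_dir c j i k) -> (k1 < k2)%nat ->
  crosses_dir c i j k1 -> crosses_dir c i j k2 ->
  exists k, (k1 < k < k2)%nat /\ crosses_dir c j i k.
Proof.
  intros Hij [k Hk] Hk12 H1 H2.
  rewrite crosses_dir_passage in *.
  assert (Hper : forall m, passage c (m + (k2 - k1)) = passage c m).
  { apply (periodic_of_repeat _ _ passage_succ_eq k1).
    replace (k1 + (k2 - k1))%nat with k2 by lia; congruence. }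
  destruct (periodic_window _ _ (k2 - k1) ltac:(lia) Hper k1 k) as (k' & Hk' & Heq).
  exists k'; rewrite crosses_dir_passage; split; [| congruence].
  assert (k' <> k1) by (intros ->; apply Hij; congruence).
  lia.
Qed.

Lemma consecutive_crossings_alternate i j k1 k2 :
  i <> j -> (exists k, crosses_dir c j i k) -> (exists k, crosses_dir c i j k) ->
  (k1 < k2)%nat -> crosses_at c i j k1 -> crosses_at c i j k2 ->
  (forall k, (k1 < k)%nat -> (k < k2)%nat -> ~ crosses_at c i j k) ->
  c k1 = c (S k2) /\ c (S k1) = c k2.
Proof.
  intros Hij Hji_ex Hij_ex Hk12 [H1 | H1] [H2 | H2] Hnone;
    try (destruct H1, H2; split; congruence); exfalso.
  - destruct (opposite_passage_between i j k1 k2 Hij Hji_ex Hk12 H1 H2) as (k & Hk & Hjik).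
    apply (Hnone k); [lia | lia | right; exact Hjik].
  - destruct (opposite_passage_between j i k1 k2 (not_eq_sym Hij) Hij_ex Hk12 H1 H2)
      as (k & Hk & Hijk).
    apply (Hnone k); [lia | lia | left; exact Hijk].
Qed.

Lemma crossings_periodic i j :
  exists T, 0 < T /\
    forall k, crosses_at c i j k ->
      exists k', crosses_at c i j k' /\ c k' = c k /\ s (S k') = s (S k) + T.
Proof.
  destruct passages_periodic as (p & Hp & Hper).
  exists (s (S p) - s 1); split.
  - pose proof (shift_times_increasing 1 (S p) ltac:(lia)); lra.
  - intros k Hk; exists (k + p)%nat.
    pose proof (shift_times_periodic p Hper k) as Htime.
    pose proof (Hper k) as Hpk.
    unfold crosses_at in *; rewrite !crosses_dir_passage in *; rewrite Hpk.
    unfold passage in Hpk; apply pair_equal_spec in Hpk.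
    repeat split; [exact Hk | apply Hpk | lra].
Qed.

End StarvingRobot.

Theorem lemma6
  (n : nat) (eps : R) (ctr : nat -> point) (E : nat -> nat -> Prop)
  (f g : nat -> R) (c : nat -> nat) (s : nat -> R) (i j : nat) :
  0 < eps < 1 / 2 ->
  disjoint_unit_circles n ctr ->
  connected_on n (potential_link n eps ctr) ->
  comm_graph n eps ctr E ->
  SCS_schedule n ctr E f g ->
  starving_motion n ctr E f g c s ->
  E i j ->
  (* the ring crosses itself at the crossing point of C_i and C_j *)
  (exists k, crosses_dir c i j k) ->
  (exists k, crosses_dir c j i k) ->
  (* consecutive passages through the crossing point alternate directions *)
  (forall k1 k2, (k1 < k2)%nat ->
     crosses_at c i j k1 -> crosses_at c i j k2 ->
     (forall k, (k1 < k)%nat -> (k < k2)%nat -> ~ crosses_at c i j k) ->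
     c k1 = c (S k2) /\ c (S k1) = c k2) /\
  (* the passages through the crossing point are periodic in time *)
  (exists T, 0 < T /\
     forall k, crosses_at c i j k ->
       exists k', crosses_at c i j k' /\ c k' = c k /\ s (S k') = s (S k) + T).
Proof.
  intros Heps Hdisj _ (E_sym & E_pot & _) (Hsched & sync & _) motion Eij Hij Hji.
  assert (ring_in_range : forall k, (c k < n)%nat)
    by (intros k; apply (E_pot _ _ (proj1 (proj2 (proj2 motion k))))).
  assert (g_ring : forall k, g (c k) = 1 \/ g (c k) = -1)
    by (intros k; apply Hsched, ring_in_range).
  assert (link_unique : forall i l l' t, E i l -> E i l' ->
            at_link ctr f g i l t -> at_link ctr f g i l' t -> l = l')
    by (intros i' l l' t Hl Hl'; apply (at_link_unique n eps); auto; lra).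
  assert (i_neq_j : i <> j) by apply (E_pot _ _ Eij).
  split.
  - intros k1 k2; eapply consecutive_crossings_alternate; eauto.
  - eapply crossings_periodic; eauto.
Qed.
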